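(* Let $G$ be a finite group with a normal subgroup $H\cong D_n$ such that $G/H\cong(\mathbb Z/2)^2$, and let $c_4>2$. Then there is no admissible homomorphism $f:T(2,2,2,c_4)\to G$ for cover type III-c, i.e. there is no surjective homomorphism $f:T(2,2,2,c_4)\to G$ such that $f(\gamma_1),f(\gamma_2),f(\gamma_3)$ have order $2$, $f(\gamma_4)$ has order $c_4$, $\pi_H(f(\gamma_i))\neq 1$ for $i=1,2,3$ and $\pi_H(f(\gamma_4))=1$.
   Context: $D_n=\langle x,y\mid x^n=y^2=1,\ yxy^{-1}=x^{-1}\rangle$. $T(2,2,2,c_4):=\langle\gamma_1,\dots,\gamma_4\mid \gamma_1\gamma_2\gamma_3\gamma_4=1,\ \gamma_1^2=\gamma_2^2=\gamma_3^2=\gamma_4^{c_4}=1\rangle$. $\pi_H:G\to G/H$ is the quotient map; the condition on $\pi_H\circ f$ expresses that $H$ corresponds to the genus zero $(\mathbb Z/2)^2$-cover of $\mathbb P^1$ branched at the first three of the four branch points with branching index 2. *)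

From mathcomp Require Import all_boot all_fingroup all_algebra.
Set Implicit Arguments. Unset Strict Implicit. Unset Printing Implicit Defensive.
Local Open Scope group_scope.

(* A homomorphism f : T(2,2,2,c4) -> G is the same as a choice of images
   g_i = f(gamma_i) in G satisfying the defining relations of T(2,2,2,c4)
   (universal property of the presentation). *)
Definition T222_hom_images (gT : finGroupType) (G : {set gT}) (c4 : nat)
    (g1 g2 g3 g4 : gT) : Prop :=
  [/\ [/\ g1 \in G, g2 \in G, g3 \in G & g4 \in G],
      g1 * g2 * g3 * g4 = 1,
      [/\ g1 ^+ 2 = 1, g2 ^+ 2 = 1 & g3 ^+ 2 = 1] & g4 ^+ c4 = 1].

Definition admissible_IIIc (gT : finGroupType) (G H : {set gT}) (c4 : nat)
    (g1 g2 g3 g4 : gT) : Prop :=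
  [/\ T222_hom_images G c4 g1 g2 g3 g4,
      <<[set g1; g2; g3; g4]>> = G,                    (* f surjective *)
      [/\ #[g1] = 2, #[g2] = 2, #[g3] = 2 & #[g4] = c4],
      [/\ coset H g1 != 1, coset H g2 != 1 & coset H g3 != 1]
    & coset H g4 = 1].

From mathcomp Require Import all_boot all_fingroup all_algebra cyclic.
Set Implicit Arguments.
Unset Strict Implicit.
Unset Printing Implicit Defensive.

Local Open Scope group_scope.

(* Write H = <x> <*> <y> with y^2 = 1 and x^y = x^-1. Every element of H outside
   <x> is an involution, so g4, of order c4 > 2, lies in <x>; hence x^2 != 1, so
   <x> is a proper subgroup of H containing all non-involutions of H, and is
   therefore normal in G. Thus |G/<x>| >= 2 |G : H| = 8, whereas G/<x> is
   generated by the images of g1, g2, g3: three involutions with product 1,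
   which generate a group of order at most 4. *)

Section Involutions.

Variable gT : finGroupType.
Implicit Types a b c : gT.

Lemma invg_sqr1 a : a ^+ 2 = 1 -> a^-1 = a.
Proof. by move=> a2; apply/eqP; rewrite eq_invg_mul -expg2 a2. Qed.

Lemma order_le2 a : a ^+ 2 = 1 -> #[a] <= 2.
Proof. by move=> a2; rewrite dvdn_leq // order_dvdn a2. Qed.

Lemma cycle_sqr_neq1 a b : b \in <[a]> -> b ^+ 2 != 1 -> a ^+ 2 != 1.
Proof.
case/cycleP=> k ->; apply: contraNneq => a2.
by rewrite -expgM mulnC expgM a2 expg1n.
Qed.

Lemma commute_involutions a b : a ^+ 2 = 1 -> b ^+ 2 = 1 -> (a * b) ^+ 2 = 1 ->
  commute a b.
Proof.
move=> a2 b2 ab2; rewrite /commute -{1}(invg_sqr1 ab2) invMg.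
by rewrite (invg_sqr1 a2) (invg_sqr1 b2).
Qed.

Lemma card_join_commuting_cycles a b : commute a b ->
  #|<[a]> <*> <[b]>| <= #[a] * #[b].
Proof.
move=> cab; rewrite cent_joinEr; last by rewrite cycle_subG /= cent_cycle; apply/cent1P.
by rewrite !orderE (mul_cardG <[a]>%G); apply: leq_pmulr; apply: cardG_gt0.
Qed.

Lemma card_gen_involutions_prod1 a b c :
  a ^+ 2 = 1 -> b ^+ 2 = 1 -> c ^+ 2 = 1 -> a * b * c = 1 ->
  #|<<[set a; b; c]>>| <= 4.
Proof.
move=> a2 b2 c2 abc1.
have defc : c = (a * b)^-1 by rewrite -(mulKg (a * b) c) abc1 mulg1.
have cab : commute a b.
  by apply: commute_involutions; rewrite // -[a * b]invgK -defc expgVn c2 invg1.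
have Aa : a \in <[a]> <*> <[b]> by rewrite mem_gen // inE cycle_id.
have Ab : b \in <[a]> <*> <[b]> by rewrite mem_gen // inE cycle_id orbT.
have sGab : <<[set a; b; c]>> \subset <[a]> <*> <[b]>.
  rewrite gen_subG; apply/subsetP => g; rewrite !inE -orbA.
  by case/or3P=> /eqP->; rewrite ?defc ?groupV ?groupM.
apply: leq_trans (subset_leq_card sGab) _.
apply: leq_trans (card_join_commuting_cycles cab) _.
exact: leq_mul (order_le2 a2) (order_le2 b2).
Qed.

End Involutions.

Section Dihedral.

Variables (gT : finGroupType) (x y : gT).
Hypotheses (y2 : y ^+ 2 = 1) (xJy : x ^ y^-1 = x^-1).

Lemma dihedral_conj : x ^ y = x^-1.
Proof. by rewrite -(invg_sqr1 y2). Qed.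

Lemma dihedral_norm : <[y]> \subset 'N(<[x]>).
Proof. by rewrite cycle_subG inE -cycleJ cycle_subG dihedral_conj groupV cycle_id. Qed.

Lemma dihedral_reflection_sqr k : (x ^+ k * y) ^+ 2 = 1.
Proof.
have yxy : y * x ^+ k * y = x ^- k.
  by rewrite -{1}(invg_sqr1 y2) -mulgA -conjgE conjXg dihedral_conj expVgn.
by rewrite expg2 -!mulgA (mulgA y) yxy mulgV.
Qed.

Lemma dihedral_mem_rotations h :
  h \in <[x]> <*> <[y]> -> h ^+ 2 != 1 -> h \in <[x]>.
Proof.
rewrite norm_joinEr ?dihedral_norm // => /mulsgP[r s /cycleP[k ->] /cycleP[i ->] ->].
rewrite -(expg_mod i y2) modn2; case: (odd i); last by rewrite expg0 mulg1 mem_cycle.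
by rewrite expg1 dihedral_reflection_sqr eqxx.
Qed.

Lemma dihedral_proper_rotations : x ^+ 2 != 1 -> <[x]> \proper <[x]> <*> <[y]>.
Proof.
move=> x2; apply/properP; split; first exact: joing_subl.
exists y; first by rewrite mem_gen // inE cycle_id orbT.
apply: contra x2 => /cycleP[j yj]; move: dihedral_conj.
by rewrite yj conjgE -expgS expgSr mulKg => xxV; rewrite expg2 {1}xxV mulVg.
Qed.

End Dihedral.

Section Quotients.

Variable gT : finGroupType.
Implicit Types G H R : {group gT}.

Lemma norm_cycle_of_noninvolutions G H x :
  G \subset 'N(H) -> x \in H -> x ^+ 2 != 1 ->
  (forall h, h \in H -> h ^+ 2 != 1 -> h \in <[x]>) ->
  G \subset 'N(<[x]>).
Proof.
move=> nHG Hx x2 rotH; apply/subsetP => g Gg; rewrite inE -cycleJ cycle_subG.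
by apply: rotH; rewrite ?memJ_norm ?(subsetP nHG) // -conjXg conjg_eq1.
Qed.

Lemma card_quotient_gen_involutions G R g1 g2 g3 g4 :
  G \subset 'N(R) -> <<[set g1; g2; g3; g4]>> = G -> g4 \in R ->
  g1 ^+ 2 = 1 -> g2 ^+ 2 = 1 -> g3 ^+ 2 = 1 -> g1 * g2 * g3 * g4 = 1 ->
  #|G / R| <= 4.
Proof.
move=> nRG defG Rg4 g1sq g2sq g3sq prod1.
have Gg : [/\ g1 \in G, g2 \in G, g3 \in G & g4 \in G].
  by rewrite -defG !mem_gen ?inE ?eqxx ?orbT.
case: Gg => /(subsetP nRG) Ng1 /(subsetP nRG) Ng2 /(subsetP nRG) Ng3
  /(subsetP nRG) Ng4.
have cosetX g : g \in 'N(R) -> g ^+ 2 = 1 -> coset R g ^+ 2 = 1.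
  by move=> Ng gsq; rewrite -morphX // gsq morph1.
have c4 : coset R g4 = 1 := coset_id Rg4.
have cprod1 : coset R g1 * coset R g2 * coset R g3 = 1.
  by rewrite -(mulg1 (_ * _)) -c4 -!morphM ?groupM // prod1 morph1.
apply: leq_trans (card_gen_involutions_prod1 (cosetX _ Ng1 g1sq)
  (cosetX _ Ng2 g2sq) (cosetX _ Ng3 g3sq) cprod1).
rewrite subset_leq_card // -defG quotient_gen ?gen_subG; last by rewrite -gen_subG defG.
apply/subsetP => _ /morphimP[g _ + ->]; rewrite !inE -!orbA => /or4P[]/eqP->;
  by rewrite /= ?c4 ?group1 // mem_gen // !inE eqxx ?orbT.
Qed.

Lemma index_quotient_ge G H R :
  R \proper H -> H \subset G -> G \subset 'N(R) -> #|G : H| * 2 <= #|G / R|.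
Proof.
move=> ltRH sHG nRG; have sRH := proper_sub ltRH.
rewrite card_quotient // -(Lagrange_index sHG sRH) leq_pmul2l ?indexg_gt0 //.
by rewrite indexg_gt1; case/andP: ltRH.
Qed.

End Quotients.

Theorem lemma5p9 (gT : finGroupType) (G H : {group gT}) (n c4 : nat) :
  H <| G ->
  H \isog Grp (x : y : x ^+ n, y ^+ 2, x ^ (y^-1) = x^-1) ->
  G / H \isog [set: 'Z_2 * 'Z_2] ->
  2 < c4 ->
  ~ (exists g1 g2 g3 g4 : gT, admissible_IIIc G H c4 g1 g2 g3 g4).
Proof.
move=> /andP[sHG nHG] /isoGrp_hom/existsP[[x y]] + isoQ c4gt2 [g1 [g2 [g3 [g4]]]].
rewrite /= !xpair_eqE /= => /and4P[/eqP defH _ /eqP y2 /eqP xJy].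
case=> [[[_ _ _ Gg4] prod1 [g1sq g2sq g3sq] _] genG [_ _ _ o4] _ Hg4].
have rotH h : h \in H -> h ^+ 2 != 1 -> h \in <[x]>.
  by rewrite -defH; apply: dihedral_mem_rotations.
have g4sq : g4 ^+ 2 != 1 by apply: contraTneq c4gt2 => /order_le2; rewrite o4 leqNgt.
have Rg4 : g4 \in <[x]> := rotH _ (coset_idr (subsetP nHG _ Gg4) Hg4) g4sq.
have x2 : x ^+ 2 != 1 := cycle_sqr_neq1 Rg4 g4sq.
have ltRH : <[x]> \proper H by rewrite -defH dihedral_proper_rotations.
have Hx : x \in H by rewrite -cycle_subG (proper_sub ltRH).
have nRG := norm_cycle_of_noninvolutions nHG Hx x2 rotH.
have iGH : #|G : H| = 4.
  by rewrite -card_quotient // (card_isog isoQ) cardsT card_prod !card_ord.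
have := leq_trans (index_quotient_ge ltRH sHG nRG)
  (card_quotient_gen_involutions nRG genG Rg4 g1sq g2sq g3sq prod1).
by rewrite iGH.
Qed.
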